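(* For every $f\in L^{\infty}(\mathbb{R}_+^{\times})$, $\overline{L}_1(f)\le\overline{M}(f)$.
   Context: $L^{\infty}(\mathbb{R}_+^{\times})$: real-valued essentially bounded measurable functions on $[1,\infty)$. $\overline{L}_1(f)=\lim_{\theta\to\infty}\limsup_{x\to\infty}\frac{1}{\log\theta}\int_x^{\theta x}f(t)\frac{dt}{t}$ and $\overline{M}(f)=\limsup_{x\to\infty}\frac1x\int_1^xf(t)\,dt$. *)

From HB Require Import structures.
From mathcomp Require Import all_boot all_order all_algebra.
From mathcomp Require Import all_classical all_reals all_analysis.
Set Implicit Arguments. Unset Strict Implicit. Unset Printing Implicit Defensive.
Import Order.TTheory GRing.Theory Num.Theory.
Import numFieldNormedType.Exports.
Local Open Scope classical_set_scope.
Local Open Scope ring_scope.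

Section Defs.
Variable R : realType.
Local Notation mu := (@lebesgue_measure R).

Definition Linfty_mult (f : R -> R) : Prop :=
  measurable_fun (`[1, +oo[%classic : set R) f /\
  exists M : R, {ae mu, forall t, `[1, +oo[%classic t -> `|f t| <= M}.

Definition log_int (f : R -> R) (theta x : R) : \bar R :=
  (\int[mu]_(t in (`[x%R, (theta * x)%R]%classic : set R)) (f t / t)%:E)%E.

Definition L1_inner (f : R -> R) (theta : R) : \bar R :=
  limf_esup (fun x : R => ((ln theta)^-1)%R%:E * log_int f theta x)%E (pinfty_nbhs R).

Definition L1bar (f : R -> R) : \bar R := lim (L1_inner f @ +oo%R).

Definition Mbar (f : R -> R) : \bar R :=
  limf_esup (fun x : R => (x^-1)%R%:E * \int[mu]_(t in (`[1%R, x]%classic : set R)) (f t)%:E)%E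
    (pinfty_nbhs R).
End Defs.

(* Truncating f at the level of its essential bound changes none of the
   integrals involved, so f may be assumed bounded by some C everywhere.  Put
   J(th, x) = \int_x^{th x} f(t) dt/t.  The cocycle identity
   J(th th', x) = J(th, x) + J(th', th x) and the bound |J(th, x)| <= C (th - 1)
   make th |-> limsup_x J(th, x) subadditive in log th, so, as in Fekete's
   lemma, limsup_x J(th, x) / log th tends to its infimum over th > 1.  To
   bound that infimum by any c > Mbar(f), cut [x, q^N x] at the points q^k x
   and replace 1/t by its value at the right end of each piece: Abel summation
   gives J(q^N, x) <= N ((1 - 1/q) c + C (q - 1)^2) + O(1), and as q -> 1
   the ratio (1 - 1/q) / log q tends to 1 while (q - 1)^2 / log q tends to 0. *)

From mathcomp Require Import all_boot all_order all_algebra.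
From mathcomp Require Import all_classical all_reals all_analysis.
From mathcomp Require Import measurable_realfun.
From mathcomp Require Import ring lra.
Import Order.TTheory GRing.Theory Num.Theory.
Import numFieldNormedType.Exports.
Local Open Scope classical_set_scope.
Local Open Scope ring_scope.

Section limf_esup_near.
Context {T : choiceType} {X : filteredType T} {R : realType}.
Context (F : set_system X) {FF : Filter F}.
Implicit Types (h : X -> \bar R) (r : \bar R).

Lemma limf_esup_le_near h r :
  (\forall x \near F, (h x <= r)%E) -> (limf_esup h F <= r)%E.
Proof.
move=> hr; rewrite limf_esupE; apply: ge_ereal_inf.
exists (ereal_sup (h @` [set x | h x <= r]%E)).
  by exists [set x | h x <= r]%E.
by apply: ge_ereal_sup => _ [x hx <-].
Qed.

Lemma limf_esup_lt_near h r :
  (limf_esup h F < r)%E -> \forall x \near F, (h x < r)%E.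
Proof.
rewrite limf_esupE => /ereal_inf_lt [_ [V FV <-]] Vr.
apply: filterS FV => x Vx; apply: le_lt_trans Vr.
by apply: ereal_sup_ubound; exists x.
Qed.

Lemma eq_near_limf_esup h1 h2 :
  (\forall x \near F, h1 x = h2 x) -> limf_esup h1 F = limf_esup h2 F.
Proof.
suff le12 h h' : (\forall x \near F, h x = h' x) ->
    (limf_esup h F <= limf_esup h' F)%E.
  move=> h12; apply/eqP; rewrite eq_le !le12 //.
  by apply: filterS h12 => x ->.
move=> hh'; rewrite !limf_esupE; apply: le_ereal_inf_tmp => _ [V FV <-].
apply: ge_ereal_inf; exists (ereal_sup (h @` (V `&` [set x | h x = h' x]))).
  by exists (V `&` [set x | h x = h' x]) => //; exact: filterI.
apply: ge_ereal_sup => _ [x [Vx /= ->] <-].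
by apply: ereal_sup_ubound; exists x.
Qed.

Lemma cvge_from_above h (l : \bar R) : (l < +oo)%E ->
  (\forall x \near F, (l <= h x)%E) ->
  (forall r : R, (l < r%:E)%E -> \forall x \near F, (h x <= r%:E)%E) ->
  h x @[x --> F] --> l.
Proof.
case: l => [l _ lb ub | // | _ _ ub]; last first.
  by apply/cvgeNyPle => A; apply: ub; exact: ltNyr.
have ub_eps e : 0 < e -> \forall x \near F, (l%:E <= h x <= (l + e)%:E)%E.
  move=> e0; have lle : (l%:E < (l + e)%:E)%E by rewrite lte_fin ltrDl.
  by apply: filterS2 lb (ub _ lle) => x -> ->.
apply/fine_cvgP; split.
  apply: filterS (ub_eps 1 ltr01) => x /andP[lx xu].
  by rewrite fin_numElt (lt_le_trans (ltNyr _) lx) (le_lt_trans xu (ltry _)).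
apply/cvgrPdist_le => e e0; apply: filterS (ub_eps e e0) => x /=.
case: (h x) => [v | | ] /andP[].
- by rewrite !lee_fin => lv vle; rewrite distrC ger0_norm ?subr_ge0 // lerBlDl.
- by move=> _ /le_lt_trans/(_ (ltry _)); rewrite ltxx.
- by move=> /(lt_le_trans (ltNyr l)); rewrite ltxx.
Qed.

End limf_esup_near.

Section real_facts.
Context {R : realType}.

Lemma lte_EFin_gap (e : \bar R) (r : R) :
  (e < r%:E)%E -> exists2 s : R, (e < s%:E)%E & s < r.
Proof.
case: e => [x | // | _].
  by rewrite lte_fin => xr; exists ((x + r) / 2); rewrite ?lte_fin; lra.
by exists (r - 1); [exact: ltNyr | rewrite ltrBlDr ltrDl].
Qed.

Lemma lee_of_real_gt (l m : \bar R) :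
  (forall c : R, (m < c%:E)%E -> (l <= c%:E)%E) -> (l <= m)%E.
Proof.
case: m => [m | | ] lm; [ | exact: leey | ].
- by apply/lee_addgt0Pr => e e0; apply: lm; rewrite lte_fin ltrDl.
- case: l lm => [l | | ] lm //; last by have := lm 0 (ltNyr _).
  by have := lm (l - 1) (ltNyr _); rewrite lee_fin => ?; exfalso; lra.
Qed.

Lemma near_pinfty_ge1 (P : R -> Prop) :
  (\forall x \near +oo, P x) -> exists2 X, 1 <= X & forall x, X <= x -> P x.
Proof.
case=> M [_ HM]; exists (Num.max 1 (M + 1)); first by rewrite le_max lexx.
move=> x; rewrite ge_max => /andP[_ Mx]; apply: HM.
by apply: lt_le_trans Mx; rewrite ltrDl.
Qed.

Lemma exists_gt_exprn (a b : R) : 1 < a -> 0 < b -> exists k, b < a ^+ k.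
Proof.
move=> a1 b0; have a0 : 0 < a by exact: lt_trans a1.
have la : 0 < ln a by exact: ln_gt0.
exists (Num.truncn (ln b / ln a)).+1.
rewrite -ltr_ln ?posrE ?exprn_gt0 // lnXn //.
by rewrite -mulr_natl -ltr_pdivrMr // truncnS_gt.
Qed.

Lemma exists_nat_mul_ge (a b : R) : 0 < b -> exists N : nat, a <= N.+1%:R * b.
Proof.
move=> b0; exists (Num.truncn (a / b)); rewrite -ler_pdivrMr //.
exact/ltW/truncnS_gt.
Qed.

Lemma ln_ge_subV (x : R) : 0 < x -> 1 - x^-1 <= ln x.
Proof.
move=> x0; have x'0 : 0 < x^-1 by rewrite invr_gt0.
have /le_ln1Dx : -1 < x^-1 - 1 by lra.
by rewrite (addrC 1) subrK lnV ?posrE //; lra.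
Qed.

Lemma exists_step_le_ln (c C d : R) : 0 <= C -> 0 < d ->
  exists2 q, 1 < q & (1 - q^-1) * c + C * (q - 1) ^+ 2 <= (c + d) * ln q.
Proof.
move=> C0 d0; set K := `|c| + 2 * C + 1.
have K0 : 0 < K by rewrite /K; have := normr_ge0 c; lra.
set h := Num.min 1 (d / K).
have h0 : 0 < h by rewrite lt_min ltr01 divr_gt0.
have h1 : h <= 1 by rewrite ge_min lexx.
have hK : K * h <= d by rewrite mulrC -ler_pdivlMr // ge_min lexx orbT.
exists (1 + h); first by rewrite ltrDl.
have q0 : 0 < 1 + h by lra.
rewrite addrAC subrr add0r.
set l := ln (1 + h); set p := 1 - (1 + h)^-1.
(* h / (1 + h) = p <= l <= h, so both error terms are O(h l). *)
have pl : p <= l by exact: ln_ge_subV.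
have lh : l <= h by apply: le_ln1Dx; lra.
have pq : p * (1 + h) = h by rewrite /p mulrBl mul1r mulVf ?gt_eqF //; ring.
have p0 : 0 <= p by nra.
have hp : h - p = h * p by nra.
have h2p : h <= 2 * p by nra.
have cpl : c * (p - l) <= `|c| * (h * l).
  have lp0 : 0 <= l - p by rewrite subr_ge0.
  apply: le_trans (ler_norm _) _; rewrite normrM distrC (ger0_norm lp0).
  by rewrite ler_wpM2l //; have := ler_wpM2l (ltW h0) pl; lra.
have Ch : C * h ^+ 2 <= 2 * C * (h * l).
  have h2l : h <= 2 * l by lra.
  by rewrite (mulrC 2) -mulrA ler_wpM2l // expr2 mulrCA ler_wpM2l // ltW.
have Kh : (`|c| + 2 * C) * (h * l) <= d * l.
  by rewrite mulrA ler_wpM2r ?ln_ge0 ?lerDl //; move: hK; rewrite /K; nra.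
nra.
Qed.

Lemma clamp_id (C x : R) : `|x| <= C -> Num.max (- C) (Num.min C x) = x.
Proof. by rewrite ler_norml => /andP[Cx xC]; rewrite (min_r xC) (max_r Cx). Qed.

Lemma normr_clamp_le (C x : R) : 0 <= C ->
  `|Num.max (- C) (Num.min C x)| <= C.
Proof.
by move=> C0; rewrite ler_norml le_max lexx ge_max ge_min lexx /= andbT; lra.
Qed.

End real_facts.

Section cc_integrals.
Context {R : realType}.
Local Notation mu := (@lebesgue_measure R).
Implicit Types (a b : R) (h : R -> R).

Lemma subset_cc_ge1 a b : 1 <= a -> `[a, b] `<=` `[1, +oo[.
Proof.
by move=> a1 t /=; rewrite !in_itv /= andbT => /andP[/(le_trans a1)].
Qed.

Lemma measurable_inv_cc a b : 0 < a -> measurable_fun `[a, b] (@GRing.inv R).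
Proof.
move=> a0; apply: (measurable_funS (measurable_itv `]0, +oo[)).
  by move=> t /=; rewrite !in_itv /= andbT => /andP[/(lt_le_trans a0)].
apply: open_continuous_measurable_fun; first exact: interval_open.
move=> x; rewrite inE /= in_itv /= andbT => x0.
by apply: inv_continuous; rewrite gt_eqF.
Qed.

Lemma integrable_cc_bounded a b h B : measurable_fun `[a, b] h ->
  (forall t, t \in `[a, b] -> `|h t| <= B) ->
  mu.-integrable `[a, b] (EFin \o h).
Proof.
move=> mh hB; apply: measurable_bounded_integrable => //.
  by apply: compact_finite_measure; exact: segment_compact.
exists B; split; first exact: num_real.
by move=> M BM t /hB /le_trans; apply; exact: ltW.
Qed.

Lemma Rintegral_cc_split h a b c : a <= b -> b <= c ->
  mu.-integrable `[a, c] (EFin \o h) ->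
  \int[mu]_(t in `[a, c]) h t =
  \int[mu]_(t in `[a, b]) h t + \int[mu]_(t in `[b, c]) h t.
Proof.
move=> ab bc ih.
have := @Rintegral_itvB R h (BLeft a) (BRight c) b ih.
rewrite !bnd_simp => /(_ ab bc) E.
rewrite -(@Rintegral_itv_obnd_cbnd _ b (BRight c)) -?E.
  by rewrite addrC subrK.
by apply: integrableS ih => //; apply: subset_itvr; rewrite bnd_simp.
Qed.

Lemma Rintegral_cc_cst a b r : a <= b ->
  \int[mu]_(t in `[a, b]) r = r * (b - a).
Proof.
move=> ab; have muE : mu `[a, b] = (b - a)%:E.
  rewrite lebesgue_measure_itv /= lte_fin.
  by case: ltgtP ab => // -> _; rewrite subrr.
by rewrite Rintegral_cst //= muE.
Qed.

Lemma normr_Rintegral_cc_le a b h B : a <= b -> measurable_fun `[a, b] h ->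
  (forall t, t \in `[a, b] -> `|h t| <= B) ->
  `|\int[mu]_(t in `[a, b]) h t| <= B * (b - a).
Proof.
move=> ab mh hB.
have ih : mu.-integrable `[a, b] (EFin \o h) by exact: integrable_cc_bounded hB.
apply: le_trans (le_normr_Rintegral _ ih) _ => //.
rewrite -Rintegral_cc_cst //; apply: le_Rintegral => //.
- exact: integrable_norm ih.
- apply: (@integrable_cc_bounded _ _ _ `|B|) => //; exact: measurable_cst.
Qed.

Lemma integral_cc_EFin a b h : mu.-integrable `[a, b] (EFin \o h) ->
  (\int[mu]_(t in `[a, b]) (h t)%:E)%E = (\int[mu]_(t in `[a, b]) h t)%:E.
Proof. by move=> ih; rewrite fineK // integrable_fin_num. Qed.

End cc_integrals.

Section measurable_on_ge1.
Context {R : realType}.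
Variable g : R -> R.
Implicit Types a b : R.
Hypothesis mg : measurable_fun (`[1, +oo[ : set R) g.

Lemma measurable_cc_ge1 a b : 1 <= a -> measurable_fun `[a, b] g.
Proof. by move=> a1; apply: measurable_funS mg => //; exact: subset_cc_ge1. Qed.

Lemma measurable_div_cc_ge1 a b : 1 <= a ->
  measurable_fun `[a, b] (fun t => g t / t).
Proof.
move=> a1; apply: measurable_funM; first exact: measurable_cc_ge1.
by apply: measurable_inv_cc; exact: lt_le_trans a1.
Qed.

End measurable_on_ge1.

Section bounded_integrand.
Context {R : realType}.
Local Notation mu := (@lebesgue_measure R).
Variables (g : R -> R) (C : R).
Hypothesis mg : measurable_fun (`[1, +oo[ : set R) g.
Hypothesis gC : forall t, `|g t| <= C.

Let C_ge0 : 0 <= C := le_trans (normr_ge0 (g 0)) (gC 0).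

Definition Rint a b := \int[mu]_(t in `[a, b]) g t.
Definition Rint_dlog a b := \int[mu]_(t in `[a, b]) (g t / t).
Definition cesaro_mean x := Rint 1 x / x.
Definition Rlog_int th x := Rint_dlog x (th * x).

Lemma normr_g_div_le s t a : 0 < a -> a <= t -> `|g s / t| <= C / a.
Proof.
move=> a0 at_; have t0 : 0 < t by exact: lt_le_trans at_.
rewrite normrM normfV (gtr0_norm t0) ler_pM ?invr_ge0 ?(ltW t0) //.
by rewrite lef_pV2 ?posrE.
Qed.

Lemma integrable_g_cc a b : 1 <= a -> mu.-integrable `[a, b] (EFin \o g).
Proof.
move=> a1; apply: (@integrable_cc_bounded _ _ _ _ C) => //.
exact: measurable_cc_ge1.
Qed.

Lemma integrable_g_div_cc a b : 1 <= a ->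
  mu.-integrable `[a, b] (EFin \o (fun t => g t / t)).
Proof.
move=> a1; apply: (@integrable_cc_bounded _ _ _ _ (C / a)).
  exact: measurable_div_cc_ge1.
move=> t; rewrite in_itv /= => /andP[at_ _].
exact: normr_g_div_le (lt_le_trans ltr01 a1) at_.
Qed.

Lemma Rint_split a b c : 1 <= a -> a <= b -> b <= c ->
  Rint a c = Rint a b + Rint b c.
Proof.
by move=> a1 ab bc; apply: Rintegral_cc_split => //; exact: integrable_g_cc.
Qed.

Lemma Rint_dlog_split a b c : 1 <= a -> a <= b -> b <= c ->
  Rint_dlog a c = Rint_dlog a b + Rint_dlog b c.
Proof.
by move=> a1 ab bc; apply: Rintegral_cc_split => //; exact: integrable_g_div_cc.
Qed.

Lemma normr_Rint_le a b : 1 <= a -> a <= b -> `|Rint a b| <= C * (b - a).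
Proof.
by move=> a1 ab; apply: normr_Rintegral_cc_le => //; exact: measurable_cc_ge1.
Qed.

Lemma normr_Rlog_int_le th x : 1 <= th -> 1 <= x ->
  `|Rlog_int th x| <= C * (th - 1).
Proof.
move=> th1 x1; have x0 : 0 < x by exact: lt_le_trans x1.
have -> : C * (th - 1) = C / x * (th * x - x) by field; rewrite gt_eqF.
apply: normr_Rintegral_cc_le; first by rewrite ler_peMl // ltW.
  exact: measurable_div_cc_ge1.
by move=> t; rewrite in_itv /= => /andP[xt _]; exact: normr_g_div_le.
Qed.

Lemma Rint_dlog_le a b : 1 <= a -> a <= b ->
  Rint_dlog a b <= Rint a b / b + C * (a^-1 - b^-1) * (b - a).
Proof.
move=> a1 ab; have a0 : 0 < a by exact: lt_le_trans a1.
have b0 : 0 < b by exact: lt_le_trans ab.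
have igb : mu.-integrable `[a, b] (EFin \o (fun t => g t / b)).
  apply: (@integrable_cc_bounded _ _ _ _ (C / a)) => [|t _].
    apply: measurable_funM; first exact: measurable_cc_ge1.
    exact: measurable_cst.
  exact: normr_g_div_le.
rewrite -lerBlDl /Rint -RintegralZr ?integrable_g_cc //.
rewrite /Rint_dlog -RintegralB //; last exact: integrable_g_div_cc.
apply: le_trans (ler_norm _) _; apply: normr_Rintegral_cc_le => //.
  apply: measurable_funB; first exact: measurable_div_cc_ge1.
  by apply: measurable_funM; [exact: measurable_cc_ge1 | exact: measurable_cst].
move=> t; rewrite in_itv /= => /andP[at_ tb].
have t0 : 0 < t by exact: lt_le_trans at_.
have inv_tb : 0 <= t^-1 - b^-1 by rewrite subr_ge0 lef_pV2 ?posrE.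
rewrite -mulrBr normrM (ger0_norm inv_tb) ler_pM ?lerB ?lef_pV2 ?posrE //.
Qed.

Lemma Rlog_int_mul th1 th2 x : 1 <= th1 -> 1 <= th2 -> 1 <= x ->
  Rlog_int (th1 * th2) x = Rlog_int th1 x + Rlog_int th2 (th1 * x).
Proof.
move=> th11 th21 x1; have x0 : 0 <= x by exact: le_trans x1.
have x_le : x <= th1 * x by rewrite ler_peMl.
rewrite /Rlog_int [th1 * th2]mulrC -mulrA (Rint_dlog_split _ _ _ x1 x_le) //.
by rewrite ler_peMl // (le_trans x0 x_le).
Qed.

Lemma Rlog_int_step q y : 1 <= q -> 1 <= y ->
  Rlog_int q y <= cesaro_mean (q * y) - cesaro_mean y / q + C * (q - 1) ^+ 2.
Proof.
move=> q1 y1; have y0 : 0 < y by exact: lt_le_trans y1.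
have q0 : 0 < q by exact: lt_le_trans q1.
have y_le : y <= q * y by rewrite ler_peMl // ltW.
apply: le_trans (Rint_dlog_le _ _ y1 y_le) _.
have -> : Rint y (q * y) = Rint 1 (q * y) - Rint 1 y.
  by rewrite (Rint_split 1 y (q * y)) // addrAC subrr add0r.
have -> : (Rint 1 (q * y) - Rint 1 y) / (q * y) =
    cesaro_mean (q * y) - cesaro_mean y / q.
  by rewrite /cesaro_mean; field; rewrite !gt_eqF.
rewrite -mulrA; have -> : (y^-1 - (q * y)^-1) * (q * y - y) = (q - 1) ^+ 2 / q.
  by field; rewrite !gt_eqF.
by rewrite lerD2l ler_wpM2l // ler_pdivrMr // ler_peMr // sqr_ge0.
Qed.

Lemma cesaro_mean_ge x : 1 <= x -> - C <= cesaro_mean x.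
Proof.
move=> x1; have x0 : 0 < x by exact: lt_le_trans x1.
rewrite /cesaro_mean ler_pdivlMr // mulNr.
apply: le_trans _ (lerNnormlW (normr_Rint_le _ _ (lexx 1) x1)).
by rewrite lerN2 ler_wpM2l // gerBl.
Qed.

Lemma Rlog_int_pow_le q c X : 1 <= q -> 1 <= X ->
  (forall y, X <= y -> cesaro_mean y <= c) ->
  forall N x, X <= x -> Rlog_int (q ^+ N) x <=
    cesaro_mean (q ^+ N * x) - cesaro_mean x
    + N%:R * ((1 - q^-1) * c + C * (q - 1) ^+ 2).
Proof.
move=> q1 X1 mean_le; elim=> [|N IH] x Xx.
all: have x1 : 1 <= x by exact: le_trans Xx.
  rewrite expr0 mul1r subrr add0r mul0r; apply: le_trans (ler_norm _) _.
  by apply: le_trans (normr_Rlog_int_le _ _ (lexx 1) x1) _; rewrite subrr mulr0.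
have q0 : 0 < q by exact: lt_le_trans q1.
have qN1 : 1 <= q ^+ N by exact: exprn_ege1.
set y := q ^+ N * x.
have y1 : 1 <= y by rewrite /y -(mulr1 1) ler_pM.
rewrite exprSr (Rlog_int_mul _ _ _ qN1 q1 x1) -/y.
have -> : q ^+ N * q * x = q * y by rewrite /y mulrAC mulrC.
have mean_step : cesaro_mean y - cesaro_mean y / q <= (1 - q^-1) * c.
  have -> : cesaro_mean y - cesaro_mean y / q = (1 - q^-1) * cesaro_mean y.
    by ring.
  rewrite ler_wpM2l ?subr_ge0 ?invf_le1 ?mean_le //.
  by apply: le_trans Xx _; rewrite /y ler_peMl // (le_trans _ x1).
have := IH x Xx; have := Rlog_int_step _ _ q1 y1.
by rewrite -/y -natr1 mulrDl mul1r; lra.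
Qed.

Lemma Rlog_int_le_log th0 r0 X : 1 < th0 -> 1 <= X ->
  (forall x, X <= x -> Rlog_int th0 x <= r0 * ln th0) ->
  forall th x, 1 <= th -> X <= x ->
  Rlog_int th x <= r0 * ln th + (`|r0| * ln th0 + C * (th0 - 1)).
Proof.
move=> th01 X1 slope_th0 th x th1 Xx.
have th00 : 0 < th0 by exact: lt_trans th01.
(* Peel factors th0 off th until th < th0. *)
have [k] := exists_gt_exprn th0 th th01 (lt_le_trans ltr01 th1).
elim: k th x th1 Xx => [|k IH] th x th1 Xx thk.
all: have x1 : 1 <= x by exact: le_trans Xx.
  by move: (le_lt_trans th1 thk); rewrite expr0 ltxx.
have th0' : 0 < th by exact: lt_le_trans th1.
have [th_lt|th0_le] := ltP th th0.
  have le_C := le_trans (ler_norm _) (normr_Rlog_int_le _ _ th1 x1).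
  have C_le : C * (th - 1) <= C * (th0 - 1) by rewrite ler_wpM2l // lerB // ltW.
  have r0_le : - (`|r0| * ln th0) <= r0 * ln th.
    rewrite lerNl -mulNr; apply: le_trans (ler_norm _) _.
    rewrite normrM normrN ger0_norm ?ln_ge0 // ler_wpM2l //.
    by rewrite ler_ln ?posrE // ltW.
  lra.
set th' := th / th0.
have th'1 : 1 <= th' by rewrite ler_pdivlMr // mul1r.
have th'k : th' < th0 ^+ k by rewrite ltr_pdivrMr // -exprSr.
have thE : th = th0 * th' by rewrite mulrC divfK // gt_eqF.
clearbody th'.
have Xx' : X <= th0 * x.
  by apply: le_trans Xx _; rewrite ler_peMl ?(ltW th01) ?(le_trans ler01 x1).
have := IH _ _ th'1 Xx' th'k; have := slope_th0 x Xx.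
rewrite thE (Rlog_int_mul _ _ _ (ltW th01) th'1 x1) lnM ?posrE //.
  lra.
exact: lt_le_trans th'1.
Qed.

Lemma log_int_Rlog_int th x : 1 <= x -> log_int g th x = (Rlog_int th x)%:E.
Proof.
by move=> x1; rewrite /log_int integral_cc_EFin //; exact: integrable_g_div_cc.
Qed.

Lemma integral_EFin_Rint (x : R) :
  (\int[mu]_(t in `[1%R, x]) (g t)%:E)%E = (Rint 1 x)%:E.
Proof. by rewrite integral_cc_EFin //; exact: integrable_g_cc. Qed.

Lemma L1_inner_le th B : 1 < th -> (\forall x \near +oo, Rlog_int th x <= B) ->
  (L1_inner g th <= (B / ln th)%:E)%E.
Proof.
move=> th1 le_B; apply: limf_esup_le_near.
apply: filterS2 (nbhs_pinfty_ge (num_real 1)) le_B => x x1 le_Bx.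
by rewrite log_int_Rlog_int // -EFinM lee_fin mulrC ler_pM2r ?invr_gt0 ?ln_gt0.
Qed.

Lemma L1_inner_lt th r : 1 < th -> (L1_inner g th < r%:E)%E ->
  \forall x \near +oo, Rlog_int th x < r * ln th.
Proof.
move=> th1 /limf_esup_lt_near.
apply: filterS2 (nbhs_pinfty_ge (num_real 1)) => x x1.
by rewrite log_int_Rlog_int // -EFinM lte_fin mulrC ltr_pdivrMr ?ln_gt0.
Qed.

Lemma cesaro_mean_lt c : (Mbar g < c%:E)%E ->
  \forall x \near +oo, cesaro_mean x < c.
Proof.
move=> /limf_esup_lt_near; apply: filterS => x.
by rewrite integral_EFin_Rint -EFinM lte_fin mulrC.
Qed.

Definition L1_inf := ereal_inf [set L1_inner g th | th in `]1, +oo[].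

Lemma L1_inf_le th : 1 < th -> (L1_inf <= L1_inner g th)%E.
Proof.
move=> th1; apply: ereal_inf_lbound; exists th => //=.
by rewrite in_itv /= andbT.
Qed.

Lemma L1_inf_lty : (L1_inf < +oo)%E.
Proof.
have two1 : (1 : R) < 2 by rewrite ltr1n.
apply: le_lt_trans (L1_inf_le _ two1) _.
apply: le_lt_trans (ltry (C * (2 - 1) / ln 2)).
apply: L1_inner_le => //; apply: filterS (nbhs_pinfty_ge (num_real 1)) => x x1.
exact: le_trans (ler_norm _) (normr_Rlog_int_le _ _ (ltW two1) x1).
Qed.

Lemma L1_inner_near_le r : (L1_inf < r%:E)%E ->
  \forall th \near +oo, (L1_inner g th <= r%:E)%E.
Proof.
case/ereal_inf_lt => _ [th0 /= th0_gt1 <-] /lte_EFin_gap[r0 th0_r0 r0_r].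
move: th0_gt1; rewrite in_itv /= andbT => th01.
have [X X1 lt_slope] := near_pinfty_ge1 _ (L1_inner_lt _ _ th01 th0_r0).
set B := `|r0| * ln th0 + C * (th0 - 1).
have Rlog_int_le th x : 1 <= th -> X <= x -> Rlog_int th x <= r0 * ln th + B.
  by apply: Rlog_int_le_log => // y /lt_slope /ltW.
set T := Num.max 2 (expR (B / (r - r0))).
apply: filterS (nbhs_pinfty_ge (num_real T)) => th.
rewrite ge_max => /andP[th2 th_exp].
have th1 : 1 < th by apply: lt_le_trans th2; lra.
have lth : 0 < ln th by exact: ln_gt0.
apply: le_trans (L1_inner_le _ (r0 * ln th + B) th1 _) _.
  apply: filterS (nbhs_pinfty_ge (num_real X)) => x.
  exact: Rlog_int_le (ltW th1).
have : B / (r - r0) <= ln th.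
  rewrite -(expRK (B / (r - r0))) ler_ln ?posrE ?expR_gt0 //.
  exact: lt_trans th1.
by rewrite lee_fin !ler_pdivrMr ?subr_gt0 //; nra.
Qed.

Lemma L1_inner_cvg : L1_inner g th @[th --> +oo] --> L1_inf.
Proof.
apply: cvge_from_above; first exact: L1_inf_lty.
  by apply: filterS (nbhs_pinfty_gt (num_real 1)) => th; exact: L1_inf_le.
exact: L1_inner_near_le.
Qed.

Lemma L1_inf_le_Mbar : (L1_inf <= Mbar g)%E.
Proof.
apply: lee_of_real_gt => c /cesaro_mean_lt /near_pinfty_ge1[X X1 mean_lt].
apply/lee_addgt0Pr => d d0; have d20 : 0 < d / 2 by rewrite divr_gt0.
have [q q1 D_le] := exists_step_le_ln c C (d / 2) C_ge0 d20.
set D := (1 - q^-1) * c + C * (q - 1) ^+ 2 in D_le.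
have lq : 0 < ln q by exact: ln_gt0.
have [N N_ge] := exists_nat_mul_ge (c + C) _ (mulr_gt0 d20 lq).
have thq : 1 < q ^+ N.+1 by rewrite exprn_egt1.
apply: le_trans (L1_inf_le _ thq) _.
apply: le_trans (L1_inner_le _ (c + C + N.+1%:R * D) thq _) _.
  apply: filterS (nbhs_pinfty_ge (num_real X)) => x Xx.
  have x1 : 1 <= x by exact: le_trans Xx.
  have mean_qx : cesaro_mean (q ^+ N.+1 * x) <= c.
    apply/ltW/mean_lt/(le_trans Xx).
    by rewrite ler_peMl ?(le_trans ler01 x1) // ltW.
  have mean_le y : X <= y -> cesaro_mean y <= c by move/mean_lt/ltW.
  have := Rlog_int_pow_le _ _ _ (ltW q1) X1 mean_le N.+1 x Xx.
  have := cesaro_mean_ge _ x1; rewrite -/D; lra.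
have ND : N.+1%:R * D <= N.+1%:R * ((c + d / 2) * ln q) by rewrite ler_wpM2l.
rewrite lee_fin lnXn ?(lt_trans ltr01) // -[ln q *+ _]mulr_natl.
by rewrite ler_pdivrMr ?mulr_gt0 //; lra.
Qed.

Lemma L1bar_le_Mbar_bounded : (L1bar g <= Mbar g)%E.
Proof. by rewrite /L1bar (cvg_lim _ L1_inner_cvg) ?L1_inf_le_Mbar. Qed.

End bounded_integrand.

Lemma ae_eq_integral_subset {d} {T : measurableType d} {R : realType}
    (mu : {measure set T -> \bar R}) (D A : set T) (f1 f2 : T -> R) :
  measurable A -> A `<=` D -> measurable_fun A f1 -> measurable_fun A f2 ->
  f1 = f2 %[ae mu in D] ->
  (\int[mu]_(t in A) (f1 t)%:E = \int[mu]_(t in A) (f2 t)%:E)%E.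
Proof.
move=> mA AD m1 m2 /(ae_eq_subset AD)/(ae_eq_comp EFin) f12.
by apply: ae_eq_integral => //; exact/measurable_EFinP.
Qed.

Section ae_eq_on_ge1.
Context {R : realType}.
Local Notation mu := (@lebesgue_measure R).
Variables f1 f2 : R -> R.
Hypotheses (m1 : measurable_fun (`[1, +oo[ : set R) f1)
  (m2 : measurable_fun (`[1, +oo[ : set R) f2).
Hypothesis f12 : f1 = f2 %[ae mu in (`[1, +oo[%classic : set R)].

Lemma L1bar_ae_eq : L1bar f1 = L1bar f2.
Proof.
rewrite /L1bar; suff -> : L1_inner f1 = L1_inner f2 by [].
apply/funext => th.
apply: eq_near_limf_esup; apply: filterS (nbhs_pinfty_ge (num_real 1)) => x x1.
congr (_ * _)%E.
apply: (ae_eq_integral_subset mu) (subset_cc_ge1 _ _ x1) _ _ _ => //.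
- exact: measurable_div_cc_ge1.
- exact: measurable_div_cc_ge1.
- exact: ae_eq_mul2r.
Qed.

Lemma Mbar_ae_eq : Mbar f1 = Mbar f2.
Proof.
rewrite /Mbar; congr limf_esup; apply/funext => x; congr (_ * _)%E.
apply: (ae_eq_integral_subset mu) (subset_cc_ge1 _ _ (lexx 1)) _ _ f12 => //;
  exact: measurable_cc_ge1.
Qed.

End ae_eq_on_ge1.

Theorem theorem4p6 (R : realType) (f : R -> R) :
  Linfty_mult f -> (L1bar f <= Mbar f)%E.
Proof.
case=> mf [M fM]; set C := `|M|.
pose g := (fun=> - C) \max ((fun=> C) \min f).
have gC t : `|g t| <= C by apply: normr_clamp_le; exact: normr_ge0.
have mg : measurable_fun (`[1, +oo[ : set R) g.
  apply: measurable_maxr; first exact: measurable_cst.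
  by apply: measurable_minr => //; exact: measurable_cst.
have fg : f = g %[ae lebesgue_measure in (`[1, +oo[%classic : set R)].
  apply: (@filterS _ _ (ae_filter_ringOfSetsType (@lebesgue_measure R)) _ _ _ fM).
  move=> t fMt /fMt ftM.
  by rewrite /g /= clamp_id // (le_trans ftM (ler_norm M)).
rewrite (L1bar_ae_eq _ _ mf mg fg) (Mbar_ae_eq _ _ mf mg fg).
exact: L1bar_le_Mbar_bounded _ _ mg gC.
Qed.
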